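(* Let $n\geq 3$ and let $l_1,\dots,l_m$ be positive integers. Let $C=C_n(l_1,\dots,l_m)$ be any graph obtained from the cycle $C_n$ by attaching $m$ pendent paths of lengths $l_1,\dots,l_m$ at vertices of $C_n$, and let $SC=SC_n(l_1,\dots,l_m)$ be the graph obtained by attaching all $m$ of these pendent paths at a single vertex $c$ of $C_n$. Then for every integer $k\geq 0$, $$n_k(C)\leq n_k(SC),$$ and for every vertex $v$ on the cycle of $C$, $$n_k(v,C)\leq n_k(c,SC).$$
   Context: A pendent path of length $\ell$ attached at a vertex $w$ consists of $\ell$ new vertices $x_1,\dots,x_\ell$ and edges $wx_1,x_1x_2,\dots,x_{\ell-1}x_\ell$; several pendent paths may be attached at the same vertex. A subtree of a graph $G$ is a subgraph that is a tree (distinguished as subgraphs). $n_k(G)$ is the number of subtrees of $G$ with exactly $k$ vertices (with $n_0(G)=1$), and $n_k(v,G)$ is the number of those containing the vertex $v$. *)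

From mathcomp Require Import all_boot.
From mathcomp Require Import boolp.
Set Implicit Arguments. Unset Strict Implicit. Unset Printing Implicit Defensive.

(* A simple graph on a finite vertex type V is given by an adjacency relation
   e : rel V (assumed symmetric and irreflexive for the graphs built below).
   Edges are 2-element vertex sets. *)

Definition edges (V : finType) (e : rel V) : {set {set V}} :=
  [set f : {set V} | [exists x : V, exists y : V,
     [&& x != y, e x y & f == [set x; y]]]].

Definition subrel (V : finType) (F : {set {set V}}) : rel V :=
  fun x y => (x != y) && ([set x; y] \in F).

Definition is_subgraph (V : finType) (e : rel V) (S : {set V}) (F : {set {set V}}) : bool :=
  (F \subset edges e) && [forall f in F, f \subset S].

Definition connectedb (V : finType) (S : {set V}) (F : {set {set V}}) : bool :=
  [forall x in S, forall y in S, connect (subrel F) x y].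

Definition has_cycle (V : finType) (S : {set V}) (F : {set {set V}}) : Prop :=
  exists (x : V) (p : seq V),
    [/\ all (fun y => y \in S) (x :: p), uniq (x :: p), 2 <= size p,
        path (subrel F) x p & subrel F (last x p) x].

Definition is_tree (V : finType) (S : {set V}) (F : {set {set V}}) : Prop :=
  [/\ S != set0, connectedb S F & ~ has_cycle S F].

Definition is_subtree (V : finType) (e : rel V) (p : {set V} * {set {set V}}) : bool :=
  is_subgraph e p.1 p.2 && `[< is_tree p.1 p.2 >].

(* n_k(G), with the convention n_0(G) = 1 *)
Definition nk (V : finType) (e : rel V) (k : nat) : nat :=
  if k is 0 then 1 else
  #|[set p : {set V} * {set {set V}} | is_subtree e p && (#|p.1| == k)]|.

Definition nkv (V : finType) (e : rel V) (v : V) (k : nat) : nat :=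
  #|[set p : {set V} * {set {set V}} |
      [&& is_subtree e p, #|p.1| == k & v \in p.1]]|.

(* Vertices: cycle vertices inl x (x : 'I_n) and path vertices inr (i; j),
   the (j+1)-th vertex x_{j+1} of the i-th pendent path (i : 'I_m, j : 'I_(l i)). *)
Definition CPV (n m : nat) (l : 'I_m -> nat) : finType :=
  ('I_n + {i : 'I_m & 'I_(l i)})%type.

(* a i : the cycle vertex at which the i-th pendent path is attached *)
Definition cp_adj (n m : nat) (l : 'I_m -> nat) (a : 'I_m -> 'I_n) : rel (@CPV n m l) :=
  fun u w =>
    match u, w with
    | inl x, inl y => (x.+1 %% n == y) || (y.+1 %% n == x)
    | inl x, inr q => (val (tagged q) == 0) && (a (tag q) == x)
    | inr q, inl y => (val (tagged q) == 0) && (a (tag q) == y)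
    | inr q, inr r => (tag q == tag r) &&
        (((val (tagged q)).+1 == val (tagged r)) || ((val (tagged r)).+1 == val (tagged q)))
    end.

(* Rotate the cycle so that a chosen cycle vertex of a subtree T of C goes to
   c, and re-hang at c every edge of T joining the cycle to a pendent path.
   The image is a subtree of SC on the same number of vertices: it stays
   connected because every pendent path of T hangs from a vertex of T, and it
   stays acyclic because in either graph a subgraph contains a cycle only if it
   contains all n cycle edges (without the cycle edge at y0, a depth function
   grades the edges so that every vertex has at most one neighbour below it).
   The map is injective: the rotation is read off the pendent vertices, which
   do not move, and a re-hung edge remembers its path, hence its old foot.
   For n_k(v, C) rotate v to c.  For n_k(C) rotate the foot of some pendent
   path of T to c, and keep T itself when it lies on the cycle or on the paths
   only. *)

From mathcomp Require Import all_boot.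
From mathcomp Require Import boolp.
From mathcomp Require Import zify.

Set Implicit Arguments. Unset Strict Implicit. Unset Printing Implicit Defensive.

Lemma imset_in_inj (T U : finType) (h : T -> U) (D : {pred T}) (A B : {set T}) :
  {in D &, injective h} -> A \subset D -> B \subset D -> h @: A = h @: B -> A = B.
Proof.
move=> h_inj; wlog suff sub_AB : A B / A \subset D -> B \subset D -> h @: A = h @: B -> A \subset B.
  by move=> sAD sBD hAB; apply/eqP; rewrite eqEsubset !sub_AB.
move=> /subsetP sAD /subsetP sBD hAB; apply/subsetP=> x xA.
have /imsetP[y yB hxy] : h x \in h @: B by rewrite -hAB imset_f.
by rewrite (h_inj x y (sAD x xA) (sBD y yB) hxy).
Qed.

Lemma leq_card_in_map (T U : finType) (f : T -> U) (A : {pred T}) (B : {pred U}) :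
  {in A &, injective f} -> {in A, forall x, f x \in B} -> #|A| <= #|B|.
Proof.
move=> f_inj fAB; rewrite -(card_in_imset f_inj); apply/subset_leq_card/subsetP.
by move=> _ /imsetP[x xA ->]; apply: fAB.
Qed.

Section Subgraphs.

Variable V : finType.
Implicit Types (S : {set V}) (F : {set {set V}}).

Lemma subrel_sym F : symmetric (subrel F).
Proof. by move=> x y; rewrite /subrel eq_sym setUC. Qed.

Lemma eq_set2 (x y x' y' : V) :
  [set x; y] = [set x'; y'] -> (x = x' /\ y = y') \/ (x = y' /\ y = x').
Proof.
move=> E; have := set21 x' y'; have := set22 x' y'; rewrite -E !inE.
have := set21 x y; have := set22 x y; rewrite E !inE.
by do 4![case/orP=> /eqP ?]; subst; auto.
Qed.

Lemma subrel_edges (e : rel V) F x y :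
  symmetric e -> F \subset edges e -> subrel F x y -> e x y.
Proof.
move=> e_sym /subsetP sFe /andP[_ /sFe]; rewrite inE.
case/existsP=> x' /existsP[y' /and3P[_ e_xy' /eqP/eq_set2[[-> ->]|[-> ->]]]] //.
by rewrite e_sym.
Qed.

Lemma edges_set2 (e : rel V) x y : x != y -> e x y -> [set x; y] \in edges e.
Proof.
by move=> xy exy; rewrite inE; apply/existsP; exists x; apply/existsP; exists y; rewrite xy exy /=.
Qed.

Lemma subrel_imset (g : {set V} -> {set V}) F u w u' w' :
  subrel F u w -> g [set u; w] = [set u'; w'] -> u' != w' -> subrel (g @: F) u' w'.
Proof. by move=> /andP[_ Fuw] g_uw u'w'; rewrite /subrel u'w' -g_uw imset_f. Qed.

Lemma connect_cut (r : rel V) (P : pred V) x y :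
  connect r x y -> P x -> ~~ P y -> exists u w, [/\ P u, ~~ P w & r u w].
Proof.
case/connectP=> p + ->; elim: p x => [|z p IHp] x /=; first by move=> _ ->.
case/andP=> r_xz r_p Px Py; have [Pz|nPz] := boolP (P z); first exact: IHp r_p Pz Py.
by exists x, z.
Qed.

Lemma connect_morph (W : finType) (r : rel V) (r' : rel W) (f : V -> W) :
  (forall u w, r u w -> f u = f w \/ r' (f u) (f w)) ->
  forall x y, connect r x y -> connect r' (f x) (f y).
Proof.
move=> f_r x y /connectP[p + ->]; elim: p x => //= z p IHp x /andP[r_xz r_p].
apply: connect_trans (IHp _ r_p).
by case: (f_r _ _ r_xz) => [->|]; [exact: connect0 | exact: connect1].
Qed.

Lemma is_subtreeP (e : rel V) S F :
  is_subtree e (S, F) <->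
  [/\ F \subset edges e, forall f, f \in F -> f \subset S, S != set0,
      forall x y, x \in S -> y \in S -> connect (subrel F) x y
    & ~ has_cycle S F].
Proof.
rewrite /is_subtree /is_subgraph /=; split.
  case/andP=> /andP[-> /forall_inP FS] /asboolP[S0 /forall_inP conn acyc].
  by split=> // x y xS; move: (conn x xS) => /forall_inP; apply.
case=> -> FS S0 conn acyc; apply/andP; split; first by apply/forall_inP.
apply/asboolP; split=> //.
by apply/forall_inP=> x xS; apply/forall_inP=> y; apply: conn.
Qed.

(* The vertex of largest [phi] on a cycle would have two distinct parents. *)
Lemma acyclic_parent S F (p : rel V) (phi : V -> nat) :
  (forall u w, subrel F u w -> p u w || p w u) ->
  (forall u w1 w2, p w1 u -> p w2 u -> w1 = w2) ->
  (forall u w, p w u -> phi w < phi u) ->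
  ~ has_cycle S F.
Proof.
move=> F_p p_uniq phi_p [x [s [_ uniq_s size_s path_s last_s]]].
have cycle_s : cycle (subrel F) (x :: s) by rewrite /= rcons_path path_s.
have [y ys y_max] := @arg_maxnP _ x (mem (x :: s)) phi (mem_head x s).
case: (rot_to ys) => i s' def_s'.
have : uniq (y :: s') by rewrite -def_s' rot_uniq.
have : cycle (subrel F) (y :: s') by rewrite -def_s' rot_cycle.
have : 3 <= size (y :: s') by rewrite -def_s' size_rot.
have in_s z : z \in y :: s' -> z \in x :: s by rewrite -def_s' mem_rot.
case: s' def_s' in_s => [|z [|z' s']] //= _ in_s _.
rewrite rcons_path => /andP[r_yz /and3P[_ _ r_wy]]; set w := last z' s' in r_wy.
have parent_of_y v : v \in x :: s -> subrel F y v || subrel F v y -> p v y.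
  move=> vs r_yv; have /orP[p_yv|//] : p y v || p v y.
    by case/orP: r_yv => /F_p //; rewrite orbC.
  by have := y_max _ vs; rewrite /= leqNgt phi_p.
have ws : w \in y :: z :: z' :: s' by rewrite (in_cons y) (in_cons z) mem_last !orbT.
have z_w : z = w.
  apply: (p_uniq y); apply: parent_of_y.
  - by apply: in_s; rewrite in_cons mem_head orbT.
  - by apply/orP; left.
  - exact: in_s ws.
  - by apply/orP; right.
by case/and3P=> _ /negP[]; rewrite z_w mem_last.
Qed.

End Subgraphs.

Section CyclicOrdinals.

Variable n : nat.
Implicit Types x y : 'I_n.

Lemma ordSE x : val (ordS x) = if x.+1 == n then 0 else x.+1.
Proof.
have := ltn_ord x; rewrite /= leq_eqVlt => /orP[/eqP->|x_lt]; first by rewrite eqxx modnn.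
by rewrite modn_small // ltn_eqF.
Qed.

Lemma val_iter_ordS k x : val (iter k (@ordS n) x) = (x + k) %% n.
Proof.
elim: k => [|k IHk] /=; first by rewrite addn0 modn_small.
by rewrite IHk -addn1 modnDml -addnA addn1.
Qed.

Lemma iter_ordS_to x y : iter (y + n - x) (@ordS n) x = y.
Proof.
apply: val_inj; rewrite val_iter_ordS.
have -> : x + (y + n - x) = y + n by have := ltn_ord x; lia.
by rewrite modnDr modn_small.
Qed.

Lemma iter_ordS_inj k : injective (iter k (@ordS n)).
Proof. by elim: k => // k IHk x y /= /ordS_inj /IHk. Qed.

Lemma ordS_neq x : 1 < n -> ordS x != x.
Proof.
move=> n_gt1; apply/eqP=> /(congr1 val); rewrite ordSE.
have := ltn_ord x; case: eqP=> /= ? ?; lia.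
Qed.

Lemma order_ordS x : order (@ordS n) x = n.
Proof.
rewrite /order -[RHS]card_ord; apply: eq_card => y.
by rewrite -{1}(iter_ordS_to x y) inE fconnect_iter.
Qed.

End CyclicOrdinals.

Section PendentPathGraph.

Variables (n m : nat) (l : 'I_m -> nat).
Local Notation V := (@CPV n m l).
Local Notation adj a := (@cp_adj n m l a).
Local Notation P := {i : 'I_m & 'I_(l i)}.
Local Notation graph := ({set V} * {set {set V}})%type.
Implicit Types (a : 'I_m -> 'I_n) (c : 'I_n) (q : P) (S : {set V}) (F : {set {set V}}).

Lemma cp_adj_sym a : symmetric (adj a).
Proof. by move=> [x|q] [y|r] //=; rewrite orbC // eq_sym. Qed.

Definition cp_parent a (w u : V) : bool :=
  match w, u with
  | inl x, inl y => ordS x == y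
  | inl x, inr q => (val (tagged q) == 0) && (a (tag q) == x)
  | inr q, inr r => (tag q == tag r) && ((val (tagged q)).+1 == val (tagged r))
  | inr _, inl _ => false
  end.

Lemma cp_adjE a u w : adj a u w = cp_parent a u w || cp_parent a w u.
Proof. by case: u w => [x|q] [y|r] //=; rewrite ?orbF // (eq_sym (tag r)) -andb_orr. Qed.

Lemma cp_parent_uniq a u w1 w2 : cp_parent a w1 u -> cp_parent a w2 u -> w1 = w2.
Proof.
case: u w1 w2 => [x|[i j]] [x1|[i1 j1]] [x2|[i2 j2]] //=.
all: try (move=> /eqP <- /eqP /ordS_inj -> //).
all: try (move=> /andP[/eqP j0 _] /andP[_ /eqP Sj]; lia).
all: try (move=> /andP[_ /eqP Sj] /andP[/eqP j0 _]; lia).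
- by move=> /andP[_ /eqP <-] /andP[_ /eqP <-].
- move=> /andP[/eqP E1 /eqP S1] /andP[/eqP E2 /eqP S2]; subst i1 i2.
  by congr (inr (existT _ _ _)); apply: val_inj => /=; lia.
Qed.

Variant cp_edge_spec a : {set V} -> Prop :=
  | CycleEdge x : cp_edge_spec a [set inl x; inl (ordS x)]
  | AttachEdge (q : P) of val (tagged q) = 0 : cp_edge_spec a [set inl (a (tag q)); inr q]
  | PathEdge (q r : P) of tag q = tag r & (val (tagged q)).+1 = val (tagged r) :
      cp_edge_spec a [set inr q; inr r].

Lemma cp_edgesP a f : f \in edges (adj a) -> cp_edge_spec a f.
Proof.
rewrite inE => /existsP[u /existsP[w /and3P[_ + /eqP ->]]].
have spec_parent v v' : cp_parent a v v' -> cp_edge_spec a [set v; v'].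
  case: v v' => [x|q] [y|r] //= => [/eqP <-|/andP[/eqP q0 /eqP <-]|/andP[/eqP tq /eqP qr]].
  - exact: CycleEdge.
  - exact: AttachEdge.
  - exact: PathEdge.
by rewrite cp_adjE => /orP[] /spec_parent; rewrite // setUC.
Qed.

Lemma cp_edges_cycle a x : 1 < n -> [set inl x; inl (ordS x)] \in edges (adj a).
Proof.
move=> n_gt1; apply: edges_set2; last by rewrite /= eqxx.
by apply: contra (ordS_neq x n_gt1) => /eqP [<-].
Qed.

Lemma cp_edges_attach a q : val (tagged q) = 0 -> [set inl (a (tag q)); inr q] \in edges (adj a).
Proof. by move=> q0; apply: edges_set2; rewrite //= q0 !eqxx. Qed.

Lemma cp_edges_path a q (r : P) : tag q = tag r -> (val (tagged q)).+1 = val (tagged r) ->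
  [set inr q; inr r] \in edges (adj a).
Proof.
move=> tqr qr; apply: edges_set2; last by rewrite /= qr eqxx andbT; apply/eqP.
by apply/eqP=> -[rq]; move: qr; rewrite rq; lia.
Qed.

(* Distance from [ordS y0] along the cycle, then down the pendent paths: it
   grades the parent relation once the cycle edge at [y0] is removed. *)
Definition cycle_depth (y0 x : 'I_n) : nat :=
  if ordS y0 <= x then x - ordS y0 else x + n - ordS y0.

Definition depth a (y0 : 'I_n) (v : V) : nat :=
  match v with
  | inl x => cycle_depth y0 x
  | inr q => cycle_depth y0 (a (tag q)) + (val (tagged q)).+1
  end.

Lemma cycle_depth_ordS y0 x : x != y0 -> cycle_depth y0 (ordS x) = (cycle_depth y0 x).+1.
Proof.
move=> /eqP x_y0; rewrite /cycle_depth !ordSE.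
have := ltn_ord x; have := ltn_ord y0; have : val x <> val y0 by move/val_inj.
case: (x.+1 =P n); case: (y0.+1 =P n) => /= *; do ?case: ifP; lia.
Qed.

Lemma depth_parent a y0 w u : cp_parent a w u ->
  (w, u) != (inl y0, inl (ordS y0)) -> depth a y0 w < depth a y0 u.
Proof.
case: w u => [x|q] [y|r] //= => [/eqP <-|/andP[_ /eqP <-] _|/andP[/eqP tq /eqP qr] _].
- have [-> //|x_y0 _] := eqVneq x y0; first by rewrite eqxx.
  by rewrite cycle_depth_ordS.
- by rewrite addnS ltnS leq_addr.
- by rewrite -qr -tq ltn_add2l.
Qed.

Lemma has_cycle_cycle_edge a S F y : F \subset edges (adj a) -> has_cycle S F ->
  [set inl y; inl (ordS y)] \in F.
Proof.
move=> sFE; apply: contraPT => y_notin.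
pose p w u := cp_parent a w u && ((w, u) != (inl y, inl (ordS y))).
apply: (@acyclic_parent _ S F p (depth a y)).
- move=> u w Fuw; have := subrel_edges (@cp_adj_sym a) sFE Fuw; rewrite cp_adjE /p.
  have not_yy (v v' : V) : subrel F v v' -> (v, v') != (inl y, inl (ordS y)).
    by move=> /andP[_ Fvv']; apply: contraNneq y_notin => -[<- <-].
  have Fwu : subrel F w u by rewrite subrel_sym.
  by rewrite (not_yy _ _ Fuw) (not_yy _ _ Fwu) !andbT.
- by move=> u w1 w2 /andP[p1 _] /andP[p2 _]; exact: cp_parent_uniq p1 p2.
- by move=> u w /andP; case; exact: depth_parent.
Qed.

Lemma cycle_edges_has_cycle S F : 2 < n -> (forall f, f \in F -> f \subset S) ->
  (forall y, [set inl y; inl (ordS y)] \in F) -> has_cycle S F.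
Proof.
move=> n_gt2 FS cycF.
have F_succ y : subrel F (inl y) (inl (ordS y)).
  rewrite /subrel cycF andbT; apply: contra (ordS_neq y (ltnW n_gt2)).
  by move=> /eqP [<-].
have inS y : inl y \in S by apply: (subsetP (FS _ (cycF y))); rewrite !inE eqxx.
pose x0 : 'I_n := Ordinal (ltnW (ltnW n_gt2)).
have orbit_x0 : orbit (@ordS n) x0 = x0 :: traject (@ordS n) (ordS x0) n.-1.
  by rewrite /orbit order_ordS -trajectS prednK // ltnW // ltnW.
set p := traject (@ordS n) (ordS x0) n.-1 in orbit_x0.
exists (inl x0), (map inl p).
have := cycle_orbit (@ordS_inj n) x0; rewrite orbit_x0 /= rcons_path => /andP[path_x0 last_x0].
split.
- by rewrite /= inS; apply/allP=> _ /mapP[y _ ->].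
- by have := orbit_uniq (@ordS n) x0; rewrite orbit_x0 -(map_inj_uniq (@inl_inj _ P)).
- by rewrite size_map size_traject; lia.
- by rewrite path_map; apply: sub_path path_x0 => u w /eqP <-; apply: F_succ.
- by rewrite last_map; have := F_succ (last x0 p); rewrite (eqP last_x0).
Qed.

Lemma has_cycleE a S F : 2 < n -> F \subset edges (adj a) ->
  (forall f, f \in F -> f \subset S) ->
  has_cycle S F <-> forall y, [set inl y; inl (ordS y)] \in F.
Proof.
move=> n_gt2 sFE FS; split=> [cyc y|]; first exact: has_cycle_cycle_edge sFE cyc.
exact: cycle_edges_has_cycle.
Qed.

Lemma connect_morph_parent a F (W : finType) (r : rel W) (h : V -> W) :
  symmetric r -> F \subset edges (adj a) ->
  (forall u w, subrel F u w -> cp_parent a u w -> h u = h w \/ r (h u) (h w)) ->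
  forall x y, connect (subrel F) x y -> connect r (h x) (h y).
Proof.
move=> r_sym sFE h_parent; apply: connect_morph => u w Fuw.
have := subrel_edges (@cp_adj_sym a) sFE Fuw; rewrite cp_adjE => /orP[]; first exact: h_parent.
rewrite subrel_sym in Fuw; case/(h_parent _ _ Fuw)=> [->|]; first by left.
by rewrite r_sym; right.
Qed.

Definition rotate (r : nat) (v : V) : V := if v is inl x then inl (iter r (@ordS n) x) else v.

Definition collapse (c : 'I_n) (v : V) : V := if v is inl _ then inl c else v.

Definition reattach_edge r c (f : {set V}) : {set V} :=
  if [exists q, inr q \in f] then collapse c @: f else rotate r @: f.

Definition reattach r c (T : graph) : graph :=
  (rotate r @: T.1, reattach_edge r c @: T.2).

Lemma rotate_inj r : injective (rotate r).
Proof. by move=> [x|q] [y|q'] //= [/iter_ordS_inj ->]. Qed.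

Lemma reattach_cycle r c x y :
  reattach_edge r c [set inl x; inl y] = rotate r @: [set inl x; inl y].
Proof. by rewrite /reattach_edge; case: existsP => // -[q]; rewrite !inE. Qed.

Lemma reattach_cycle_edge r c x : reattach_edge r c [set inl x; inl (ordS x)] =
  [set inl (iter r (@ordS n) x); inl (ordS (iter r (@ordS n) x))].
Proof. by rewrite reattach_cycle imsetU1 imset_set1 /= -iterSr. Qed.

Lemma reattach_attach r c x q : reattach_edge r c [set inl x; inr q] = [set inl c; inr q].
Proof.
rewrite /reattach_edge; case: existsP => [_|[]]; last by exists q; rewrite !inE eqxx orbT.
by rewrite imsetU1 imset_set1.
Qed.

Lemma reattach_path r c q (q' : P) : reattach_edge r c [set inr q; inr q'] = [set inr q; inr q'].
Proof.
rewrite /reattach_edge; case: existsP => [_|[]]; last by exists q; rewrite !inE eqxx.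
by rewrite imsetU1 imset_set1.
Qed.

Lemma reattach_edges a r c f : 1 < n -> f \in edges (adj a) ->
  reattach_edge r c f \in edges (adj (fun _ => c)).
Proof.
move=> n_gt1; case/cp_edgesP=> [x|q q0|q q' tq qq'].
- by rewrite reattach_cycle_edge cp_edges_cycle.
- by rewrite reattach_attach (cp_edges_attach (fun _ => c)).
- by rewrite reattach_path cp_edges_path.
Qed.

Lemma reattach_edge_inj a r c : {in edges (adj a) &, injective (reattach_edge r c)}.
Proof.
move=> f1 f2; case/cp_edgesP=> [x1|q1 _|q1 q1' _ _]; case/cp_edgesP=> [x2|q2 _|q2 q2' _ _];
  rewrite ?reattach_cycle ?reattach_attach ?reattach_path.
all: try by move/(imset_inj (@rotate_inj r)).
all: rewrite ?imsetU1 ?imset_set1 //=.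
all: by case/eq_set2=> -[E1 E2]; try discriminate; case: E2 => ->.
Qed.

Lemma reattach_edge_sub r c f : reattach_edge r c f \subset inl c |: rotate r @: f.
Proof.
rewrite /reattach_edge; case: ifP=> _; last exact: subsetUr.
apply/subsetP=> _ /imsetP[[x|q] fv ->]; first exact: setU11.
by apply/setU1P; right; exact: (imset_f (rotate r) fv).
Qed.

Lemma reattach_connect_cycle a r c F x y : F \subset edges (adj a) ->
  connect (subrel F) (inl x) (inl y) ->
  connect (subrel (reattach_edge r c @: F)) (inl (iter r (@ordS n) x)) (inl (iter r (@ordS n) y)).
Proof.
move=> sFE; pose foot (v : V) := match v with inl x => x | inr q => a (tag q) end.
pose h (v : V) : V := inl (iter r (@ordS n) (foot v)).
apply: (@connect_morph_parent a F _ _ h (@subrel_sym _ _) sFE) (inl x) (inl y).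
move=> [x1|q] [y1|q'] Fuw //= => [_|/andP[_ /eqP <-]|/andP[/eqP tq _]]; last first.
- by left; rewrite /h /foot tq.
- by left.
right.
apply: (subrel_imset Fuw); first by rewrite reattach_cycle imsetU1 imset_set1.
by apply: contraTneq Fuw => -[/iter_ordS_inj ->]; rewrite /subrel eqxx.
Qed.

Lemma reattach_connect_path a r c F q x : F \subset edges (adj a) ->
  connect (subrel F) (inr q) (inl x) -> connect (subrel (reattach_edge r c @: F)) (inr q) (inl c).
Proof.
move=> sFE.
pose h (v : V) : V := if v is inr q' then (if tag q' == tag q then v else inl c) else inl c.
move/(@connect_morph_parent a F _ _ h (@subrel_sym _ _) sFE); rewrite /h /= eqxx; apply.
move=> [x1|q1] [y1|q2] Fuw //= => [_|_|/andP[/eqP tq _]]; first by left.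
  case: ifP=> _; last by left.
  by right; apply: (subrel_imset Fuw (reattach_attach r c x1 q2)).
rewrite -tq; case: ifP=> _; last by left.
by right; apply: (subrel_imset Fuw (reattach_path r c q1 q2)); case/andP: Fuw.
Qed.

Lemma reattach_subtree a r c S F u : 2 < n -> is_subtree (adj a) (S, F) ->
  inl u \in S -> iter r (@ordS n) u = c -> is_subtree (adj (fun _ => c)) (reattach r c (S, F)).
Proof.
move=> n_gt2 /is_subtreeP[sFE FS _ conn acyc] uS ruc; rewrite /reattach /=.
set F' := reattach_edge r c @: F.
have c_in : inl c \in rotate r @: S by rewrite -ruc (imset_f (rotate r) uS).
have sFE' : F' \subset edges (adj (fun _ => c)).
  by apply/subsetP=> _ /imsetP[f fF ->]; apply: reattach_edges (ltnW n_gt2) (subsetP sFE _ fF).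
have FS' f' : f' \in F' -> f' \subset rotate r @: S.
  case/imsetP=> f fF ->; apply: subset_trans (reattach_edge_sub r c f) _.
  by rewrite subUset sub1set c_in imsetS ?FS.
have to_c v : v \in S -> connect (subrel F') (rotate r v) (inl c).
  case: v => [x|q] vS; last exact: reattach_connect_path sFE (conn _ _ vS uS).
  by rewrite -ruc; apply: reattach_connect_cycle sFE (conn _ _ vS uS).
apply/is_subtreeP; split=> //.
- by apply/set0Pn; exists (inl c).
- move=> _ _ /imsetP[v vS ->] /imsetP[w wS ->]; apply: connect_trans (to_c v vS) _.
  by rewrite (sym_connect_sym (@subrel_sym _ _)) to_c.
- rewrite (has_cycleE (a := fun _ => c)) // => cycF'.
  apply: acyc; apply/(has_cycleE (a := a)) => // y.
  have y_edge := cp_edges_cycle a y (ltnW n_gt2).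
  have /imsetP[f fF] := cycF' (iter r (@ordS n) y).
  by rewrite -(reattach_cycle_edge r c) => /(reattach_edge_inj y_edge (subsetP sFE _ fF)) ->.
Qed.

Lemma reattach_inj a r c :
  {in [pred T : graph | T.2 \subset edges (adj a)] &, injective (reattach r c)}.
Proof.
move=> [S1 F1] [S2 F2] /= sF1 sF2 [/(imset_inj (@rotate_inj r)) -> EF]; congr pair.
exact: imset_in_inj (@reattach_edge_inj a r c) sF1 sF2 EF.
Qed.

Lemma card_reattach r c T : #|(reattach r c T).1| = #|T.1|.
Proof. exact/card_imset/rotate_inj. Qed.

Lemma subtree_attach a S F x q : is_subtree (adj a) (S, F) ->
  inl x \in S -> inr q \in S -> inl (a (tag q)) \in S.
Proof.
move=> /is_subtreeP[sFE FS _ conn _] xS qS.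
pose on_path (v : V) := if v is inr q' then tag q' == tag q else false.
have [u [w []]] := @connect_cut _ _ on_path _ _ (conn _ _ qS xS) (eqxx _) isT.
case: u => [//|q1] /= /eqP tq1 wP Fuw; have /andP[_ Fe] := Fuw.
have := subrel_edges (@cp_adj_sym a) sFE Fuw.
case: w wP Fuw Fe => [y|q2] /= wP Fuw Fe; last by case/andP=> /eqP tq2; rewrite -tq2 tq1 eqxx in wP.
by case/andP=> _ /eqP ay; rewrite -tq1 ay (subsetP (FS _ Fe)) // set22.
Qed.

Definition mixed S := [exists x, inl x \in S] && [exists q, inr q \in S].

Lemma inr_rotate r S q : (inr q \in rotate r @: S) = (inr q \in S).
Proof. by apply/imsetP/idP=> [[[x|q'] vS //= [->]] //|qS]; exists (inr q). Qed.

Lemma mixed_rotate r S : mixed (rotate r @: S) = mixed S.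
Proof.
rewrite /mixed; congr andb; last by apply: eq_existsb => q; rewrite inr_rotate.
apply/existsP/existsP=> [[x /imsetP[[y|q] yS //= _]]|[x xS]]; first by exists y.
by exists (iter r (@ordS n) x); apply: (imset_f (rotate r) xS).
Qed.

Lemma subtree_unmixed a c S F : 1 < n -> ~~ mixed S ->
  is_subtree (adj a) (S, F) -> is_subtree (adj (fun _ => c)) (S, F).
Proof.
move=> n_gt1 unmixed /is_subtreeP[sFE FS S0 conn acyc]; apply/is_subtreeP; split=> //.
apply/subsetP=> f fF; move: (FS f fF); case/cp_edgesP: (subsetP sFE f fF) => [x|q _|q q' tq qq'] fS.
- exact: cp_edges_cycle.
- case/negP: unmixed; apply/andP; split; apply/existsP.
    by exists (a (tag q)); exact: (subsetP fS _ (set21 _ _)).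
  by exists q; exact: (subsetP fS _ (set22 _ _)).
- exact: cp_edges_path.
Qed.

(* Depends only on the pendent vertices of [S], which [reattach] does not move. *)
Definition gather_shift a c S : nat :=
  if [pick q | inr q \in S] is Some q then c + n - a (tag q) else 0.

Definition gather a c (T : graph) : graph :=
  if mixed T.1 then reattach (gather_shift a c T.1) c T else T.

Lemma gather_shift_rotate a c r S : gather_shift a c (rotate r @: S) = gather_shift a c S.
Proof. by rewrite /gather_shift (eq_pick (inr_rotate r S)). Qed.

Lemma card_gather a c T : #|(gather a c T).1| = #|T.1|.
Proof. by rewrite /gather; case: ifP=> // _; rewrite card_reattach. Qed.

Lemma gather_subtree a c T : 2 < n ->
  is_subtree (adj a) T -> is_subtree (adj (fun _ => c)) (gather a c T).
Proof.
case: T => S F n_gt2 TS; rewrite /gather /=; case: ifP=> [|/negbT unmixed]; last first.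
  exact: subtree_unmixed (ltnW n_gt2) unmixed TS.
case/andP=> /existsP[x xS] /existsP[q qS]; rewrite /gather_shift.
case: pickP=> [q' q'S|/(_ q)]; last by rewrite qS.
apply: reattach_subtree n_gt2 TS (subtree_attach TS xS q'S) _.
exact: iter_ordS_to.
Qed.

Lemma gather_inj a c :
  {in [pred T : graph | T.2 \subset edges (adj a)] &, injective (gather a c)}.
Proof.
move=> [S1 F1] [S2 F2] sF1 sF2; rewrite /gather /=.
case M1: (mixed S1); case M2: (mixed S2) => E.
- have := congr1 (gather_shift a c \o fst) E; rewrite /= !gather_shift_rotate => shift12.
  by move: E; rewrite shift12; exact: reattach_inj sF1 sF2.
- by move: M1; rewrite -(mixed_rotate (gather_shift a c S1)) [_ @: _](congr1 fst E) M2.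
- by move: M2; rewrite -(mixed_rotate (gather_shift a c S2)) -[_ @: _](congr1 fst E) M1.
- exact: E.
Qed.

End PendentPathGraph.

Theorem lemma3 (n m : nat) (l : 'I_m -> nat) (a : 'I_m -> 'I_n) (c : 'I_n) :
  3 <= n -> (forall i, 0 < l i) ->
  forall k : nat,
    nk (@cp_adj n m l a) k <= nk (@cp_adj n m l (fun _ => c)) k /\
    (forall v : 'I_n,
       nkv (@cp_adj n m l a) (inl v) k <= nkv (@cp_adj n m l (fun _ => c)) (inl c) k).
Proof.
move=> n_gt2 _ k.
have subtree_edges e T : is_subtree e T -> T.2 \subset edges e by case/andP=> /andP[].
split=> [|v].
- case: k => [//|k]; apply: (leq_card_in_map (f := gather a c)).
    by apply: sub_in2 (@gather_inj _ _ _ a c) => T; rewrite inE => /andP[/subtree_edges].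
  by move=> T; rewrite !inE card_gather => /andP[/(gather_subtree c n_gt2) -> ->].
- apply: (leq_card_in_map (f := reattach (c + n - v) c)).
    by apply: sub_in2 (@reattach_inj _ _ _ a _ c) => T; rewrite inE => /andP[/subtree_edges].
  move=> [S F]; rewrite !inE card_reattach => /and3P[TS -> vS] /=.
  rewrite (reattach_subtree n_gt2 TS vS (iter_ordS_to v c)) /=.
  by rewrite -{1}(iter_ordS_to v c) (imset_f (rotate _) vS).
Qed.
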